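(* Let $V$ be a finite-dimensional complex vector space with a Hermitian inner product and norm $\|\cdot\|$, let $\mathbf G$ be a finite group of unitary transformations of $V$, and let $\mathbf x_0\in V$ with $\|\mathbf x_0\|=1$ have full orbit under $\mathbf G$. Fix a subgroup sequence $\{I\}=\mathbf G_0<\mathbf G_1<\cdots<\mathbf G_m=\mathbf G$ and coset leader sets $\operatorname{CL}(\mathbf G_k/\mathbf G_{k-1})$, $1\le k\le m$. Then the subgroup decoding algorithm decodes correctly with some noise if and only if, for every $k$ with $0\le k<m$, every induced coset leader in $\operatorname{CL}(\mathbf G/\mathbf G_k)$ is minimal (as a coset representative of $\mathbf G_k$ in $\mathbf G$).
   Context: $\mathbf x_0$ has full orbit if $|\mathbf G\mathbf x_0|=|\mathbf G|$; $S=\operatorname{Stab}_{\mathbf G}(\mathbf x_0)$, and for a subgroup $H$, $\operatorname{Stab}_H(\mathbf x_0)=H\cap S$. Codewords are the vectors $g^{-1}\mathbf x_0$, $g\in\mathbf G$. A set $\operatorname{CL}(\mathbf G_k/\mathbf G_{k-1})$ of coset leaders is a set of representatives of the left cosets $a\mathbf G_{k-1}$ of $\mathbf G_{k-1}$ in $\mathbf G_k$ containing $I$. For $k<l$ the induced coset leaders are $\operatorname{CL}(\mathbf G_l/\mathbf G_k)=\{c_l c_{l-1}\cdots c_{k+1}: c_i\in\operatorname{CL}(\mathbf G_i/\mathbf G_{i-1})\}$, a complete set of left coset representatives of $\mathbf G_k$ in $\mathbf G_l$. Subgroup decoding algorithm: given $\mathbf r\in V$, set $\mathbf r_0=\mathbf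 r$; for $k=1,\dots,m$ choose $d_k\in\operatorname{CL}(\mathbf G_k/\mathbf G_{k-1})$ minimizing $\|a\mathbf r_{k-1}-\mathbf x_0\|$ over $a\in\operatorname{CL}(\mathbf G_k/\mathbf G_{k-1})$ (ties broken by a fixed ordering) and set $\mathbf r_k=d_k\mathbf r_{k-1}$; output $g'=d_m\cdots d_1$. It decodes correctly with some noise if there is $\delta>0$ such that for all $g\in\mathbf G$ and $\mathbf r\in V$ with $\|\mathbf r-g^{-1}\mathbf x_0\|<\delta$ the output lies in $Sg$. Fundamental region of a subgroup $H$: $\operatorname{FR}(H)=\{\mathbf x\in V:\|\mathbf x-\mathbf x_0\|<\|h\mathbf x-\mathbf x_0\|\text{ for all }h\in H\setminus\operatorname{Stab}_H(\mathbf x_0)\}$. For subgroups $H\le K$, a coset representative $c$ of $H$ in $K$ is minimal if $\mathbf x_0\in c(\operatorname{FR}(H))$. *)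

From HB Require Import structures.
From mathcomp Require Import all_boot all_order all_algebra all_fingroup.
From mathcomp Require Import reals.
From mathcomp.real_closed Require Import complex.
Set Implicit Arguments. Unset Strict Implicit. Unset Printing Implicit Defensive.
Import Order.TTheory GRing.Theory Num.Theory.
Local Open Scope ring_scope.

(* V = C^n (column vectors over C = R[i], R the real numbers) with the
   standard Hermitian inner product; G is given as the image of a faithful
   unitary representation rho of a finite group G (acting by v |-> rho g *m v). *)

Section SubgroupDecoding.
Variables (R : realType) (n : nat) (gT : finGroupType).
Variables (rho : gT -> 'M[R[i]]_n) (x0 : 'cV[R[i]]_n).

Definition hnorm (v : 'cV[R[i]]_n) : R :=
  Num.sqrt (\sum_i (complex.Re (v i 0) ^+ 2 + complex.Im (v i 0) ^+ 2)).

Definition adjmx (A : 'M[R[i]]_n) : 'M[R[i]]_n := (map_mx Num.conj A)^T.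

Definition unitary_mx (A : 'M[R[i]]_n) : Prop := adjmx A *m A = 1%:M.

Definition argmin_first (f : gT -> R) (s : seq gT) : gT :=
  foldl (fun b a => if f a < f b then a else b) (head 1%g s) s.

(* s is a set of coset leaders of H in K (left cosets a H), containing 1,
   listed in a fixed order (the order used to break ties) *)
Definition coset_leaders (K H : {set gT}) (s : seq gT) : Prop :=
  [/\ uniq s, (1%g \in s), {subset s <= K} &
      forall a, a \in K -> exists! c, c \in s /\ c \in (a *: H)%g].

Variable CL : nat -> seq gT.

(* after k steps: (d_k ... d_1, r_k) *)
Fixpoint dec_rec (k : nat) (r : 'cV[R[i]]_n) : gT * 'cV[R[i]]_n :=
  match k with
  | 0 => (1%g, r)
  | k'.+1 =>
      let p := dec_rec k' r in
      let d := argmin_first (fun a => hnorm (rho a *m p.2 - x0)) (CL k) in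
      ((d * p.1)%g, rho d *m p.2)
  end.

Definition subgroup_decode (m : nat) (r : 'cV[R[i]]_n) : gT := (dec_rec m r).1.

Definition stab (H : {set gT}) : {set gT} := [set h in H | rho h *m x0 == x0].

Definition in_FR (H : {set gT}) (x : 'cV[R[i]]_n) : Prop :=
  forall h, h \in (H :\: stab H) -> hnorm (x - x0) < hnorm (rho h *m x - x0).

Definition minimal_rep (H : {set gT}) (c : gT) : Prop :=
  exists y, in_FR H y /\ x0 = rho c *m y.

Definition decodes_correctly_with_noise (G : {set gT}) (m : nat) : Prop :=
  exists delta : R, 0 < delta /\
    forall (g : gT) (r : 'cV[R[i]]_n), g \in G ->
      hnorm (r - rho g^-1%g *m x0) < delta ->
      subgroup_decode m r \in (stab G :* g)%g.

(* induced coset leaders CL(G_{k+j}/G_k) = { c_{k+j} ... c_{k+1} } *)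
Fixpoint ind_CL (k j : nat) : seq gT :=
  match j with
  | 0 => [:: 1%g]
  | j'.+1 => [seq (c * d)%g | c <- CL (k + j), d <- ind_CL k j']
  end.

End SubgroupDecoding.

From HB Require Import structures.
From mathcomp Require Import all_boot all_order all_algebra all_fingroup.
From mathcomp Require Import reals.
From mathcomp.real_closed Require Import complex.
From mathcomp Require Import ring lra.
Set Implicit Arguments. Unset Strict Implicit. Unset Printing Implicit Defensive.
Import Order.TTheory GRing.Theory Num.Theory.
Local Open Scope ring_scope.

(* Write [codeword c] for the codeword rho(c)^-1 x0. Since the orbit of x0 is
   full, its stabiliser is trivial, so a leader c is minimal for G_k exactly
   when [codeword c] is strictly nearer to x0 than all its other G_k-images.
   If all induced leaders are minimal, finiteness gives a uniform positive gap
   between the nearest and the second nearest choice at every step; a received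
   word within half that gap of the codeword of g = c_m ... c_1 then makes step
   k pick exactly c_k, so the decoder returns g. Conversely, if the decoder
   tolerates noise, perturbing [codeword (d * a)] slightly towards x0 must not
   change the choice of the leader a, which forces [codeword d] to be strictly
   nearer to x0 than [codeword (d * a)]; an induction along the chain then
   shows that every induced leader is minimal. *)

Section HermitianNorm.
Variables (R : realType) (n : nat).
Implicit Types (v w p q : 'cV[R[i]]_n) (t : R).

Definition sqnorm v : R :=
  \sum_i (complex.Re (v i 0) ^+ 2 + complex.Im (v i 0) ^+ 2).

Lemma hnormE v : hnorm v = Num.sqrt (sqnorm v). Proof. by []. Qed.

Lemma sqnorm_ge0 v : 0 <= sqnorm v.
Proof. by apply: sumr_ge0 => i _; rewrite addr_ge0 ?sqr_ge0. Qed.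

Lemma hnorm_ge0 v : 0 <= hnorm v. Proof. exact: sqrtr_ge0. Qed.

Lemma ler_hnorm v w : (hnorm v <= hnorm w) = (sqnorm v <= sqnorm w).
Proof. by rewrite !hnormE ler_sqrt // sqnorm_ge0. Qed.

Lemma hnorm_eq0 v : (hnorm v == 0) = (v == 0).
Proof.
rewrite hnormE sqrtr_eq0 le_eqVlt ltNge sqnorm_ge0 orbF.
rewrite psumr_eq0 => [|i _]; last by rewrite addr_ge0 ?sqr_ge0.
apply/allP/eqP => [v0|-> i _]; last by rewrite mxE /= expr0n addr0.
apply/matrixP => i j; rewrite ord1 mxE.
move/eqP: (v0 i (mem_index_enum _)); case: (v i 0) => a b /= ab0.
have [a0 b0] : a ^+ 2 = 0 /\ b ^+ 2 = 0.
  by split; apply/eqP; rewrite eq_le sqr_ge0 andbT; nra.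
by move/eqP: a0; move/eqP: b0; rewrite !sqrf_eq0 => /eqP-> /eqP->.
Qed.

Lemma hnorm_gt0 v : (0 < hnorm v) = (v != 0).
Proof. by rewrite lt_def hnorm_ge0 hnorm_eq0 andbT. Qed.

Lemma sqnorm_gt0 v : (0 < sqnorm v) = (v != 0).
Proof. by rewrite -hnorm_gt0 hnormE sqrtr_gt0. Qed.

Lemma hnorm0 : hnorm (0 : 'cV[R[i]]_n) = 0.
Proof. by apply/eqP; rewrite hnorm_eq0. Qed.

Lemma conjc_mul (z : R[i]) :
  Num.conj z * z = (complex.Re z ^+ 2 + complex.Im z ^+ 2)%:C%C.
Proof.
by case: z => a b; apply/eqP; rewrite eq_complex /=; apply/andP; split; apply/eqP; ring.
Qed.

Lemma sqnorm_unitary (U : 'M[R[i]]_n) v : unitary_mx U -> sqnorm (U *m v) = sqnorm v.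
Proof.
have sqnormE w : (sqnorm w)%:C%C = ((map_mx Num.conj w)^T *m w) 0 0.
  by rewrite rmorph_sum mxE; apply: eq_bigr => i _; rewrite !mxE conjc_mul.
move=> U_unitary; apply: complexI; rewrite !sqnormE map_mxM trmx_mul.
by rewrite -mulmxA (mulmxA _ U) -/(adjmx U) U_unitary mul1mx.
Qed.

Lemma hnorm_unitary (U : 'M[R[i]]_n) v : unitary_mx U -> hnorm (U *m v) = hnorm v.
Proof. by move=> U_unitary; rewrite !hnormE sqnorm_unitary. Qed.

Lemma sqnormD_le v w (l : R) : 0 < l ->
  sqnorm (v + w) <= (1 + l) * sqnorm v + (1 + l^-1) * sqnorm w.
Proof.
move=> l_gt0; rewrite /sqnorm !mulr_sumr -big_split /=; apply: ler_sum => i _.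
have ll : l * l^-1 = 1 by rewrite mulfV ?gt_eqF.
have l'_gt0 : 0 < l^-1 by rewrite invr_gt0.
rewrite mxE; case: (v i 0) (w i 0) => a b [c d] /=.
have young x y : 2 * x * y <= l * x ^+ 2 + l^-1 * y ^+ 2.
  have : 0 <= l^-1 * (l * x - y) ^+ 2 by rewrite mulr_ge0 ?sqr_ge0 ?ltW.
  have -> : l^-1 * (l * x - y) ^+ 2 =
    (l * l^-1) * (l * x ^+ 2) - 2 * (l * l^-1) * x * y + l^-1 * y ^+ 2 by ring.
  by rewrite ll; lra.
have := young a c; have := young b d; nra.
Qed.

Lemma hnormD v w : hnorm (v + w) <= hnorm v + hnorm w.
Proof.
have [->|v0] := eqVneq v 0; first by rewrite add0r hnorm0 add0r.
have [->|w0] := eqVneq w 0; first by rewrite addr0 hnorm0 addr0.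
have a_gt0 : 0 < hnorm v by rewrite hnorm_gt0.
have b_gt0 : 0 < hnorm w by rewrite hnorm_gt0.
rewrite -[hnorm v + hnorm w]ger0_norm ?addr_ge0 ?hnorm_ge0 //.
rewrite -sqrtr_sqr hnormE ler_sqrt ?sqr_ge0 //.
apply: le_trans (sqnormD_le v w (divr_gt0 b_gt0 a_gt0)) _.
rewrite -(sqr_sqrtr (sqnorm_ge0 v)) -(sqr_sqrtr (sqnorm_ge0 w)) -!hnormE invf_div.
set a := hnorm v; set b := hnorm w.
suff -> : (1 + b / a) * a ^+ 2 + (1 + a / b) * b ^+ 2 = (a + b) ^+ 2 by [].
by field; rewrite !gt_eqF.
Qed.

Lemma hnormN v : hnorm (- v) = hnorm v.
Proof.
rewrite !hnormE; congr Num.sqrt; apply: eq_bigr => i _.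
by rewrite mxE; case: (v i 0) => a b /=; rewrite !sqrrN.
Qed.

Lemma hnormD_ge v w : hnorm v - hnorm w <= hnorm (v + w).
Proof. by rewrite lerBlDr -{1}(addrK w v) -(hnormN w) hnormD. Qed.

Lemma hnormZ t v : 0 <= t -> hnorm (t%:C%C *: v) = t * hnorm v.
Proof.
move=> t_ge0; rewrite !hnormE -[t in RHS](ger0_norm t_ge0) -sqrtr_sqr -sqrtrM ?sqr_ge0 //.
congr Num.sqrt; rewrite /sqnorm mulr_sumr; apply: eq_bigr => i _.
by rewrite !mxE; case: (v i 0) => a b /=; ring.
Qed.

Lemma sqnorm_translate v p q t (w := v + t%:C%C *: (p - q)) :
  sqnorm (w - q) - sqnorm (w - p) = sqnorm (v - q) - sqnorm (v - p) + 2 * t * sqnorm (p - q).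
Proof.
rewrite /w /sqnorm mulr_sumr -!sumrB -big_split /=; apply: eq_bigr => i _.
by rewrite !mxE; case: (v i 0) (p i 0) (q i 0) => a b [c d] [e f] /=; ring.
Qed.

End HermitianNorm.

Section ArgminFirst.
Variables (R : realType) (T : finGroupType) (f : T -> R).

Let step b a := if f a < f b then a else b.

Lemma foldl_argmin_spec b0 s :
  let r := foldl step b0 s in
  r \in b0 :: s /\ (f r <= f b0 /\ forall a, a \in s -> f r <= f a).
Proof.
elim: s b0 => [|x s IH] b0 /=; first by rewrite mem_seq1.
rewrite /step; case: ifP => fx.
  have [r_in [r_le r_min]] := IH x; split; first by rewrite in_cons r_in orbT.
  split; first exact: le_trans r_le (ltW fx).
  by move=> a; rewrite in_cons => /orP[/eqP->|/r_min].
have [r_in [r_le r_min]] := IH b0; split.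
  by move: r_in; rewrite !in_cons => /orP[->|->]; rewrite ?orbT.
split=> // a; rewrite in_cons => /orP[/eqP->|/r_min //].
by apply: le_trans r_le _; rewrite leNgt fx.
Qed.

Lemma argmin_first_mem s : (1%g \in s) -> argmin_first f s \in s.
Proof.
case: s => [//|x s] _; have [] := foldl_argmin_spec x (x :: s).
by rewrite /argmin_first /= in_cons => /orP[/eqP->|]; rewrite ?mem_head.
Qed.

Lemma argmin_first_le s a : a \in s -> f (argmin_first f s) <= f a.
Proof. by have [_ [_]] := foldl_argmin_spec (head 1%g s) s; apply. Qed.

Lemma argmin_first_strict s a : (1%g \in s) -> a \in s ->
  (forall b, b \in s -> b != a -> f a < f b) -> argmin_first f s = a.
Proof.
move=> s1 sa a_min; apply/eqP; apply: contraT => ne_a.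
have := argmin_first_le sa; rewrite leNgt.
by rewrite (a_min _ (argmin_first_mem s1) ne_a).
Qed.

End ArgminFirst.

Lemma finite_pos_lower_bound (R : realType) (T : finType) (P : pred T) (f : T -> R) :
  (forall x, P x -> 0 < f x) -> exists2 e, 0 < e & forall x, P x -> e <= f x.
Proof.
move=> f_gt0; case: (pickP P) => [y Py|P0]; last by exists 1 => // x; rewrite P0.
by case: (arg_minP f Py) => x Px x_min; exists (f x); [exact: f_gt0|].
Qed.

Lemma uniq_map_inj_in (T1 T2 : eqType) (f : T1 -> T2) (s : seq T1) :
  uniq (map f s) -> {in s &, injective f}.
Proof.
elim: s => [//|z s IH] /= /andP[fz_notin f_uniq] x y.
rewrite !in_cons => /orP[/eqP->|sx] /orP[/eqP->|sy] // fxy.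
- by move: fz_notin; rewrite fxy map_f.
- by move: fz_notin; rewrite -fxy map_f.
- exact: IH.
Qed.

Section SubgroupDecoding.
Variables (R : realType) (n : nat) (gT : finGroupType) (G : {group gT}).
Variables (rho : gT -> 'M[R[i]]_n) (x0 : 'cV[R[i]]_n).
Hypothesis rhoM : {in G &, {morph rho : x y / (x * y)%g >-> x *m y}}.
Hypothesis rho_unitary : forall g, g \in G -> unitary_mx (rho g).
Hypothesis x0_full_orbit : size (undup [seq rho g *m x0 | g <- enum G]) = #|G|.

Local Open Scope group_scope.
Implicit Types (g h : gT) (v w : 'cV[R[i]]_n).

Local Notation codeword c := (rho c^-1 *m x0).

Lemma rho1 : rho 1 = 1%:M.
Proof.
have rho11 : rho 1 = rho 1 *m rho 1 by rewrite -rhoM ?mulg1.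
have U1 := rho_unitary (group1 G).
have : adjmx (rho 1) *m (rho 1 *m rho 1) = 1%:M by rewrite -rho11.
by rewrite mulmxA U1 mul1mx.
Qed.

Lemma rhoMv g h v : g \in G -> h \in G -> rho (g * h) *m v = rho g *m (rho h *m v).
Proof. by move=> Gg Gh; rewrite rhoM // mulmxA. Qed.

Lemma rhoVK g v : g \in G -> rho g^-1 *m (rho g *m v) = v.
Proof. by move=> Gg; rewrite -rhoMv ?groupV // mulVg rho1 mul1mx. Qed.

Lemma hnorm_rho g v : g \in G -> hnorm (rho g *m v) = hnorm v.
Proof. by move=> Gg; apply/hnorm_unitary/rho_unitary. Qed.

Lemma hnorm_rho_subx0 g v : g \in G -> hnorm (rho g *m v - x0) = hnorm (v - codeword g).
Proof. by move=> Gg; rewrite -(hnorm_rho _ (groupVr Gg)) mulmxBr rhoVK. Qed.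

Lemma rho_codeword g h : g \in G -> h \in G -> rho h *m codeword g = codeword (g * h^-1).
Proof. by move=> Gg Gh; rewrite -rhoMv ?groupV // invMg invgK. Qed.

Lemma orbit_inj g h : g \in G -> h \in G -> rho g *m x0 = rho h *m x0 -> g = h.
Proof.
have: uniq [seq rho g *m x0 | g <- enum G].
  apply: contraT; rewrite -ltn_size_undup x0_full_orbit size_map -cardE.
  by rewrite ltnn.
by move=> /uniq_map_inj_in inj Gg Gh; apply: inj; rewrite mem_enum.
Qed.

Lemma stab_trivial (H : {group gT}) : H \subset G -> stab rho x0 H = 1.
Proof.
move=> sHG; apply/setP => g; rewrite !inE; apply/andP/eqP => [[Hg /eqP]|->].
  by rewrite -{2}(mul1mx x0) -rho1; apply: orbit_inj; rewrite // (subsetP sHG).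
by rewrite group1 rho1 mul1mx.
Qed.

Definition nearest_on (H : {set gT}) v :=
  forall h, h \in H -> h != 1 -> hnorm (v - x0) < hnorm (rho h *m v - x0).

Lemma nearest_on_le (H : {group gT}) v h : nearest_on H v -> h \in H ->
  hnorm (v - x0) <= hnorm (rho h *m v - x0).
Proof.
move=> v_min Hh; have [->|h1] := eqVneq h 1; first by rewrite rho1 mul1mx.
exact/ltW/v_min.
Qed.

Lemma minimal_repP (H : {group gT}) c : H \subset G -> c \in G ->
  minimal_rep rho x0 H c <-> nearest_on H (codeword c).
Proof.
move=> sHG Gc; have FR_E y : in_FR rho x0 H y <-> nearest_on H y.
  rewrite /in_FR stab_trivial //; split=> y_min h.
    by move=> Hh h1; apply: y_min; rewrite !inE h1.
  by rewrite !inE => /andP[h1 Hh]; apply: y_min.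
split=> [[y [/FR_E y_min ->]]|/FR_E c_min]; first by rewrite rhoVK.
exists (codeword c); split=> //.
by rewrite -rhoMv ?groupV // mulgV rho1 mul1mx.
Qed.

Lemma nearest_on_x0 : nearest_on G x0.
Proof.
move=> h Gh h1; rewrite subrr hnorm0 hnorm_gt0 subr_eq0; apply: contra h1 => /eqP hx0.
by apply/eqP/orbit_inj; rewrite // rho1 mul1mx.
Qed.

Variables (m : nat) (Gs : nat -> {group gT}) (CL : nat -> seq gT).
Hypothesis Gs0 : (Gs 0 : {set gT}) = 1.
Hypothesis Gsm : (Gs m : {set gT}) = G.
Hypothesis Gs_chain : forall k, (0 < k <= m)%N -> Gs k.-1 \proper Gs k.
Hypothesis CL_leaders :
  forall k, (0 < k <= m)%N -> coset_leaders (Gs k) (Gs k.-1) (CL k).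

Lemma Gs_subS k : (k < m)%N -> Gs k \subset Gs k.+1.
Proof. by move=> km; apply: proper_sub; apply: (Gs_chain (k := k.+1)). Qed.

Lemma Gs_mono i j : (i <= j <= m)%N -> Gs i \subset Gs j.
Proof.
case/andP; elim: j => [|j IH] ij jm; first by move: ij; rewrite leqn0 => /eqP->.
move: ij; rewrite leq_eqVlt => /orP[/eqP->//|ij].
exact: subset_trans (IH ij (ltnW jm)) (Gs_subS jm).
Qed.

Lemma Gs_sub_G k : (k <= m)%N -> Gs k \subset G.
Proof. by move=> km; rewrite -Gsm; apply: Gs_mono; rewrite km leqnn. Qed.

Lemma mem_Gs_G k g : (k <= m)%N -> g \in Gs k -> g \in G.
Proof. by move/Gs_sub_G/subsetP; apply. Qed.

Lemma CL1 k : (k < m)%N -> 1 \in CL k.+1.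
Proof. by move=> km; case: (CL_leaders (k := k.+1) km). Qed.

Lemma CL_sub k : (k < m)%N -> {subset CL k.+1 <= Gs k.+1}.
Proof. by move=> km; case: (CL_leaders (k := k.+1) km). Qed.

Lemma CL_cover k g : (k < m)%N -> g \in Gs k.+1 ->
  exists2 a, a \in CL k.+1 & a^-1 * g \in Gs k.
Proof.
move=> km Gg; case: (CL_leaders (k := k.+1) km) => _ _ _ /(_ g Gg) [a [[CLa ga] _]].
by exists a => //; rewrite -(invgK g) -invMg groupV -mem_lcoset.
Qed.

Lemma CL_uniq k a1 a2 u1 u2 : (k < m)%N -> a1 \in CL k.+1 -> a2 \in CL k.+1 ->
  u1 \in Gs k -> u2 \in Gs k -> a1 * u1 = a2 * u2 -> a1 = a2.
Proof.
move=> km CLa1 CLa2 Gu1 Gu2 E.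
have Gg : a1 * u1 \in Gs k.+1.
  by rewrite groupM ?(CL_sub km CLa1) ?(subsetP (Gs_subS km) _ Gu1).
have coset1 : a1 \in (a1 * u1) *: Gs k by rewrite mem_lcoset invMg mulgKV groupV.
have coset2 : a2 \in (a1 * u1) *: Gs k by rewrite E mem_lcoset invMg mulgKV groupV.
case: (CL_leaders (k := k.+1) km) => _ _ _ /(_ _ Gg) [c [_ c_uniq]].
by rewrite -(c_uniq a1) ?(c_uniq a2).
Qed.

Lemma ind_CL_sub k j : (k + j <= m)%N -> {subset ind_CL CL k j <= Gs (k + j)}.
Proof.
elim: j => [|j IH] kjm x /=; first by rewrite mem_seq1 addn0 => /eqP->.
case/allpairsPdep => a [d [CLa Id ->]]; rewrite addnS in kjm CLa *.
by rewrite groupM ?(CL_sub kjm CLa) ?(subsetP (Gs_subS kjm) _ (IH (ltnW kjm) _ Id)).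
Qed.

Lemma ind_CL_cover k j g : (k + j <= m)%N -> g \in Gs (k + j) ->
  exists c h, [/\ c \in ind_CL CL k j, h \in Gs k & g = c * h].
Proof.
elim: j g => [|j IH] g kjm Gg.
  by exists 1, g; rewrite mem_seq1 mul1g -(addn0 k).
rewrite addnS in kjm Gg; have [a CLa Ga'g] := CL_cover kjm Gg.
have [d [h [Id Gh E]]] := IH _ (ltnW kjm) Ga'g.
exists (a * d), h; split=> //; last by rewrite -mulgA -E mulKVg.
by apply/allpairsPdep; exists a, d; rewrite addnS.
Qed.

Lemma ind_CL_uniq k j c1 c2 h1 h2 : (k + j <= m)%N ->
  c1 \in ind_CL CL k j -> c2 \in ind_CL CL k j -> h1 \in Gs k -> h2 \in Gs k ->
  c1 * h1 = c2 * h2 -> c1 = c2.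
Proof.
elim: j c1 c2 h1 h2 => [|j IH] c1 c2 h1 h2 kjm /=.
  by rewrite !mem_seq1 => /eqP-> /eqP->.
move=> /allpairsPdep [a1 [d1 [CLa1 Id1 ->]]] /allpairsPdep [a2 [d2 [CLa2 Id2 ->]]].
move=> Gh1 Gh2; rewrite -!mulgA; rewrite addnS in kjm CLa1 CLa2.
have Gdh d h : d \in ind_CL CL k j -> h \in Gs k -> d * h \in Gs (k + j).
  move=> Id Gh; rewrite groupM ?(ind_CL_sub (ltnW kjm) Id) //.
  by apply: subsetP Gh; apply: Gs_mono; rewrite leq_addr ltnW.
move=> E; have a12 := CL_uniq kjm CLa1 CLa2 (Gdh _ _ Id1 Gh1) (Gdh _ _ Id2 Gh2) E.
by move: E; rewrite a12 => /mulgI /(IH _ _ _ _ (ltnW kjm) Id1 Id2 Gh1 Gh2) ->.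
Qed.

Lemma mem_ind_CL_S k j x : x \in ind_CL CL k j.+1 <->
  exists d a, [/\ d \in ind_CL CL k.+1 j, a \in CL k.+1 & x = d * a].
Proof.
elim: j x => [|j IH] x; split.
- case/allpairsPdep => a [d [CLa]]; rewrite mem_seq1 => /eqP-> ->.
  by exists 1, a; rewrite mem_seq1 mulg1 mul1g -addn1.
- case=> d [a [+ CLa ->]]; rewrite mem_seq1 => /eqP->.
  by apply/allpairsPdep; exists a, 1; rewrite mem_seq1 mulg1 mul1g addn1.
- case/allpairsPdep => c [d [CLc /IH [d' [a [Id' CLa ->]]] ->]].
  exists (c * d'), a; split=> //; last by rewrite mulgA.
  by apply/allpairsPdep; exists c, d'; rewrite addSnnS.
- case=> d [a [/allpairsPdep [c [d' [CLc Id' ->]]] CLa ->]].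
  apply/allpairsPdep; exists c, (d' * a); split; last by rewrite mulgA.
    by rewrite -addSnnS.
  by apply/IH; exists d', a.
Qed.

Local Notation leaders k := (ind_CL CL k (m - k)).

Lemma leaders_m : leaders m = [:: 1].
Proof. by rewrite subnn. Qed.

Lemma mem_leaders k x : (k < m)%N -> x \in leaders k <->
  exists d a, [/\ d \in leaders k.+1, a \in CL k.+1 & x = d * a].
Proof. by move=> km; rewrite -subnSK //; apply: mem_ind_CL_S. Qed.

Lemma leaders_sub_G k : (k <= m)%N -> {subset leaders k <= G}.
Proof. by move=> km c; rewrite -Gsm -{2}(subnKC km); apply: ind_CL_sub; rewrite subnKC. Qed.

Lemma leaders0 g : g \in G -> g \in leaders 0.
Proof.
rewrite -Gsm => Gg; have [c [h [I0c]]] := @ind_CL_cover 0 m g (leqnn m) Gg.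
by rewrite Gs0 inE => /eqP-> ->; rewrite mulg1 subn0.
Qed.

Lemma leaders_uniq k c1 c2 h1 h2 : (k <= m)%N ->
  c1 \in leaders k -> c2 \in leaders k -> h1 \in Gs k -> h2 \in Gs k ->
  c1 * h1 = c2 * h2 -> c1 = c2 /\ h1 = h2.
Proof.
move=> km Ic1 Ic2 Gh1 Gh2 E; have c12 : c1 = c2.
  by apply: (ind_CL_uniq _ Ic1 Ic2 Gh1 Gh2 E); rewrite subnKC.
by split=> //; move: E; rewrite c12 => /mulgI.
Qed.

Local Notation dec k r := (dec_rec rho x0 CL k r).

Definition dec_pick k r :=
  argmin_first (fun a => hnorm (rho a *m (dec k r).2 - x0)) (CL k.+1).

Lemma dec_recS k r :
  dec k.+1 r = (dec_pick k r * (dec k r).1, rho (dec_pick k r) *m (dec k r).2).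
Proof. by []. Qed.

Lemma dec_pick_mem k r : (k < m)%N -> dec_pick k r \in CL k.+1.
Proof. by move=> km; apply/argmin_first_mem/CL1. Qed.

Lemma dec_prod_mem k r : (k <= m)%N -> (dec k r).1 \in Gs k.
Proof.
elim: k => [|k IH] km; first by rewrite Gs0 inE.
rewrite dec_recS groupM ?(CL_sub km (dec_pick_mem r km)) //.
exact: subsetP (Gs_subS km) _ (IH (ltnW km)).
Qed.

Lemma dec_vec k r : (k <= m)%N -> (dec k r).2 = rho (dec k r).1 *m r.
Proof.
elim: k => [|k IH] km; first by rewrite rho1 mul1mx.
rewrite dec_recS /= IH ?(ltnW km) // rhoMv //.
  exact: mem_Gs_G km (CL_sub km (dec_pick_mem r km)).
exact: mem_Gs_G (ltnW km) (dec_prod_mem r (ltnW km)).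
Qed.

Lemma dec_prefix k j r : (k + j <= m)%N ->
  exists2 e, e \in ind_CL CL k j & (dec (k + j) r).1 = e * (dec k r).1.
Proof.
elim: j => [|j IH] kjm; first by exists 1; rewrite ?mem_seq1 ?addn0 ?mul1g.
rewrite addnS in kjm; have [e Ie E] := IH (ltnW kjm).
exists (dec_pick (k + j) r * e); last by rewrite addnS dec_recS E mulgA.
apply/allpairsPdep; exists (dec_pick (k + j) r), e; split=> //.
by rewrite addnS; apply: dec_pick_mem.
Qed.

Lemma decode_prefix k r : (k <= m)%N ->
  exists2 e, e \in leaders k & subgroup_decode rho x0 CL m r = e * (dec k r).1.
Proof. by move=> km; have := @dec_prefix k (m - k) r; rewrite subnKC //; apply. Qed.

Lemma decode_steps k d a r : (k < m)%N -> d \in leaders k.+1 -> a \in CL k.+1 ->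
  subgroup_decode rho x0 CL m r = d * a -> (dec k r).1 = 1 /\ dec_pick k r = a.
Proof.
move=> km Id CLa out_da.
have Ida : d * a \in leaders k by apply/mem_leaders => //; exists d, a.
have [e Ie E] := decode_prefix r (ltnW km).
have [_ Dk1] : e = d * a /\ (dec k r).1 = 1.
  apply: leaders_uniq (ltnW km) Ie Ida (dec_prod_mem r (ltnW km)) (group1 _) _.
  by rewrite mulg1 -E.
have [e' Ie' E'] := decode_prefix r km.
have Gpick : dec_pick k r \in Gs k.+1 := CL_sub km (dec_pick_mem r km).
split=> //; apply: (proj2 (leaders_uniq km Ie' Id Gpick (CL_sub km CLa) _)).
by rewrite -out_da E' dec_recS /= Dk1 mulg1.
Qed.

(* A decoder that tolerates noise of size delta must return [d * a] for the
   received word [codeword (d * a) + t (x0 - codeword a)], hence prefers [a] to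
   [1] at step [k]; for small [t > 0] this is only possible if [codeword (d * a)]
   is strictly closer to [codeword a] than to [x0]. *)
Lemma decodes_leader_strict : decodes_correctly_with_noise rho x0 CL G m ->
  forall k d a, (k < m)%N -> d \in leaders k.+1 -> a \in CL k.+1 -> a != 1 ->
  hnorm (codeword d - x0) < hnorm (codeword (d * a) - x0).
Proof.
case=> delta [delta_gt0 dec_ok] k d a km Id CLa a1.
have Ga : a \in G := mem_Gs_G km (CL_sub km CLa).
have Gda : d * a \in G by rewrite groupM ?(leaders_sub_G km Id).
set v := codeword (d * a); set q := codeword a.
have -> : codeword d = rho a *m v by rewrite rho_codeword // mulgK.
rewrite hnorm_rho_subx0 // -/q ltNge; apply/negP => v_le.
have K_gt0 : 0 < hnorm (x0 - q).
  rewrite hnorm_gt0 subr_eq0 eq_sym; apply: contra a1 => /eqP qE.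
  by rewrite -invg_eq1; apply/eqP/orbit_inj; rewrite ?groupV // rho1 mul1mx -/q qE.
pose t := (delta / (2 * hnorm (x0 - q)))%R.
have t_gt0 : 0 < t by rewrite divr_gt0 ?mulr_gt0.
set r := v + t%:C%C *: (x0 - q).
have near_r : hnorm (r - v) < delta.
  rewrite addrC addKr hnormZ ?ltW //.
  have -> : (t * hnorm (x0 - q) = delta / 2)%R by rewrite /t; field; rewrite gt_eqF.
  lra.
have := dec_ok _ r Gda near_r; rewrite stab_trivial // mem_rcoset inE divg_eq1.
move=> /eqP /(decode_steps km Id CLa) [Dk1 pick_a].
have rk : (dec k r).2 = r by rewrite (dec_vec r (ltnW km)) Dk1 rho1 mul1mx.
have := argmin_first_le (fun b => hnorm (rho b *m (dec k r).2 - x0)) (CL1 km).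
rewrite -/(dec_pick k r) pick_a rk rho1 mul1mx hnorm_rho_subx0 // -/q ler_hnorm.
have /= := sqnorm_translate v x0 q t; rewrite -/r.
have : (0 < t * sqnorm (x0 - q))%R by rewrite mulr_gt0 // sqnorm_gt0 -hnorm_gt0.
move: v_le; rewrite ler_hnorm; lra.
Qed.

Lemma nearest_leaders_of_strict :
  (forall k d a, (k < m)%N -> d \in leaders k.+1 -> a \in CL k.+1 -> a != 1 ->
     hnorm (codeword d - x0) < hnorm (codeword (d * a) - x0)) ->
  forall k c, (k <= m)%N -> c \in leaders k -> nearest_on (Gs k) (codeword c).
Proof.
move=> leader_strict; elim=> [|k IH] c km Ic h.
  by rewrite Gs0 inE => ->.
move=> Gh h1; have Gc := leaders_sub_G km Ic.
have [a CLa Gu'] := CL_cover km (groupVr Gh).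
have Ga : a \in G := mem_Gs_G km (CL_sub km CLa).
have Gu : h * a \in Gs k by rewrite -groupV invMg.
have Ica : c * a \in leaders k by apply/mem_leaders => //; exists c, a.
have hcE : rho h *m codeword c = rho (h * a) *m codeword (c * a).
  rewrite !rho_codeword ?groupM ?(mem_Gs_G km Gh) ?(mem_Gs_G (ltnW km) Gu) //.
  by rewrite [(h * a)^-1]invMg mulgA mulgK.
rewrite hcE; have [a1|a_ne1] := eqVneq a 1.
  by move: Gu Ica; rewrite a1 !mulg1 => Gh' Ic'; apply: (IH _ (ltnW km) Ic').
apply: lt_le_trans (leader_strict _ _ _ km Ic CLa a_ne1) _.
exact: nearest_on_le (IH _ (ltnW km) Ica) Gu.
Qed.

Lemma nearest_leaders_of_minimal :
  (forall k, (k < m)%N -> forall c, c \in leaders k -> minimal_rep rho x0 (Gs k) c) ->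
  forall k c, (k <= m)%N -> c \in leaders k -> nearest_on (Gs k) (codeword c).
Proof.
move=> leaders_min k c km Ic; have [k_lt_m|k_ge_m] := ltnP k m.
  by apply/(minimal_repP (Gs_sub_G km) (leaders_sub_G km Ic))/leaders_min.
have km' : k = m by apply/eqP; rewrite eqn_leq km.
move: Ic; rewrite km' leaders_m mem_seq1 Gsm => /eqP->.
by rewrite invg1 rho1 mul1mx; apply: nearest_on_x0.
Qed.

Lemma leaders_gap :
  (forall k c, (k <= m)%N -> c \in leaders k -> nearest_on (Gs k) (codeword c)) ->
  exists2 gap, 0 < gap & forall k d h, (k < m)%N -> d \in leaders k.+1 ->
    h \in Gs k.+1 -> h != 1 ->
    (hnorm (codeword d - x0) + gap <= hnorm (rho h *m codeword d - x0))%R.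
Proof.
move=> near.
pose P (x : 'I_m * gT * gT) :=
  [&& x.1.2 \in leaders x.1.1.+1, x.2 \in Gs x.1.1.+1 & x.2 != 1].
pose f (x : 'I_m * gT * gT) :=
  (hnorm (rho x.2 *m codeword x.1.2 - x0) - hnorm (codeword x.1.2 - x0))%R.
have [|gap gap_gt0 gap_le] := @finite_pos_lower_bound R _ P f.
  move=> [[k d] h] /and3P [Id Gh h1]; rewrite subr_gt0.
  exact: near (ltn_ord k) Id _ Gh h1.
exists gap => // k d h km Id Gh h1; rewrite -lerBrDl.
by apply: (gap_le (Ordinal km, d, h)); apply/and3P.
Qed.

Section DecodingStep.
Variables (gap : R) (k : nat) (d a : gT) (r e : 'cV[R[i]]_n).
Hypothesis d_gap : forall h, h \in Gs k.+1 -> h != 1 ->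
  (hnorm (codeword d - x0) + gap <= hnorm (rho h *m codeword d - x0))%R.

(* By the triangle inequality, noise of norm below [gap / 2] moves every
   candidate distance by less than [gap / 2]. *)
Lemma dec_pick_nearest : (k < m)%N -> d \in G -> a \in CL k.+1 ->
  (dec k r).2 = (codeword (d * a) + e)%R -> (hnorm e < gap / 2)%R -> dec_pick k r = a.
Proof.
move=> km Gd CLa rk small_e.
have Gsa : a \in Gs k.+1 := CL_sub km CLa.
apply: argmin_first_strict (CL1 km) CLa _ => b CLb b_ne_a.
have Gsb : b \in Gs k.+1 := CL_sub km CLb.
have [Ga Gb] := (mem_Gs_G km Gsa, mem_Gs_G km Gsb).
have splitE c : c \in G -> (rho c *m (dec k r).2 - x0 =
    (rho (c * a^-1) *m codeword d - x0) + rho c *m e)%R.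
  move=> Gc; rewrite rk mulmxDr !rho_codeword ?groupM ?groupV //.
  by rewrite [(c * a^-1)^-1]invMg invgK mulgA addrAC.
rewrite !splitE // mulgV rho1 mul1mx.
have ba_gap : (hnorm (codeword d - x0) + gap <= hnorm (rho (b * a^-1) *m codeword d - x0))%R.
  apply: d_gap; last by rewrite divg_eq1.
  by rewrite groupM ?groupV.
have := hnormD (codeword d - x0) (rho a *m e).
have := hnormD_ge (rho (b * a^-1) *m codeword d - x0) (rho b *m e).
rewrite !hnorm_rho //; lra.
Qed.
End DecodingStep.

Lemma decode_invariant gap g r :
  (forall k d h, (k < m)%N -> d \in leaders k.+1 -> h \in Gs k.+1 -> h != 1 ->
     (hnorm (codeword d - x0) + gap <= hnorm (rho h *m codeword d - x0))%R) ->
  g \in G -> (hnorm (r - codeword g) < gap / 2)%R ->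
  forall k, (k <= m)%N -> exists2 c, c \in leaders k & g = c * (dec k r).1.
Proof.
move=> gap_le Gg near_r; elim=> [_|k IH km]; first by exists g; rewrite ?leaders0 ?mulg1.
have [c Ic gE] := IH (ltnW km).
have [d [a [Id CLa cE]]] := (mem_leaders _ km).1 Ic.
have GDk : (dec k r).1 \in G := mem_Gs_G (ltnW km) (dec_prod_mem r (ltnW km)).
set e := rho (dec k r).1 *m (r - codeword g).
have rk : (dec k r).2 = (codeword (d * a) + e)%R.
  rewrite dec_vec ?(ltnW km) // /e mulmxBr rho_codeword //.
  by rewrite gE mulgK cE addrC subrK.
have pick_a : dec_pick k r = a.
  have Gd := leaders_sub_G km Id.
  by apply: (dec_pick_nearest (fun h => gap_le k d h km Id) km Gd CLa rk); rewrite hnorm_rho.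
by exists d => //; rewrite dec_recS /= pick_a mulgA -cE.
Qed.

Lemma minimal_leaders_of_decodes : decodes_correctly_with_noise rho x0 CL G m ->
  forall k, (k < m)%N -> forall c, c \in leaders k -> minimal_rep rho x0 (Gs k) c.
Proof.
move=> dec_ok k km c Ic; have Gc := leaders_sub_G (ltnW km) Ic.
apply/(minimal_repP (Gs_sub_G (ltnW km)) Gc).
exact: nearest_leaders_of_strict (decodes_leader_strict dec_ok) _ _ (ltnW km) Ic.
Qed.

Lemma decodes_of_minimal_leaders :
  (forall k, (k < m)%N -> forall c, c \in leaders k -> minimal_rep rho x0 (Gs k) c) ->
  decodes_correctly_with_noise rho x0 CL G m.
Proof.
move=> leaders_min.
have [gap gap_gt0 gap_le] := leaders_gap (nearest_leaders_of_minimal leaders_min).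
exists (gap / 2)%R; split=> [|g r Gg near_r]; first by rewrite divr_gt0.
have [c] := decode_invariant gap_le Gg near_r (leqnn m).
rewrite leaders_m mem_seq1 => /eqP->; rewrite mul1g => gE.
by rewrite stab_trivial // mem_rcoset /subgroup_decode -gE mulgV group1.
Qed.

End SubgroupDecoding.

Theorem theoremA (R : realType) (n : nat) (gT : finGroupType) (G : {group gT})
    (rho : gT -> 'M[R[i]]_n) (x0 : 'cV[R[i]]_n)
    (m : nat) (Gs : nat -> {group gT}) (CL : nat -> seq gT) :
  {in G &, {morph rho : x y / (x * y)%g >-> x *m y}} ->
  {in G &, injective rho} ->
  (forall g, g \in G -> unitary_mx (rho g)) ->
  hnorm x0 = 1 ->
  size (undup [seq rho g *m x0 | g <- enum G]) = #|G| ->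
  (Gs 0%N : {set gT}) = 1%g ->
  (Gs m : {set gT}) = G ->
  (forall k, (0 < k <= m)%N -> Gs k.-1 \proper Gs k) ->
  (forall k, (0 < k <= m)%N -> coset_leaders (Gs k) (Gs k.-1) (CL k)) ->
  (decodes_correctly_with_noise rho x0 CL G m <->
   forall k, (k < m)%N -> forall c, c \in ind_CL CL k (m - k) ->
     minimal_rep rho x0 (Gs k) c).
Proof.
move=> rhoM _ rho_unitary _ full_orbit Gs0 Gsm Gs_chain CL_leaders; split.
  exact: minimal_leaders_of_decodes.
exact: decodes_of_minimal_leaders.
Qed.
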